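(* Let $\eta>0$ and $\beta\in\mathbb{R}$. Let $\widehat{\mathcal{L}}_1,\widehat{\mathcal{L}}_2\in\mathbb{R}^{N\times N}$ satisfy $\langle \widehat{\mathcal{L}}_i\mathbf{x},\mathbf{x}\rangle\le 0$ for all $\mathbf{x}\in\mathbb{R}^N$ and $i=1,2$, and additionally $\langle \widehat{\mathcal{L}}_1\mathbf{w},\widehat{\mathcal{L}}_2\mathbf{w}\rangle\ge 0$ for all $\mathbf{w}\in\mathbb{R}^N$. Set $\gamma_*:=\frac{\eta^2+\beta^2}{\eta}$ and $$\mathcal{P}_{\gamma_*}:=\left[\eta I-\widehat{\mathcal{L}}_2+\beta^2(\eta I-\widehat{\mathcal{L}}_1)^{-1}\right](\gamma_* I-\widehat{\mathcal{L}}_2)^{-1}.$$ Then $\mathcal{P}_{\gamma_*}$ is invertible and its two-norm condition number satisfies $$\kappa(\mathcal{P}_{\gamma_*})=\|\mathcal{P}_{\gamma_*}\|\,\|\mathcal{P}_{\gamma_*}^{-1}\|\le 2+\frac{\beta^2}{\eta^2}.$$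
   Context: $\langle\cdot,\cdot\rangle$ and $\|\cdot\|$ denote the Euclidean inner product and the induced vector norm / operator two-norm on $\mathbb{R}^N$. The hypothesis $\langle \widehat{\mathcal{L}}_i\mathbf{x},\mathbf{x}\rangle\le 0$ for all $\mathbf{x}$ (field of values in the closed left half plane) guarantees that $\eta I-\widehat{\mathcal{L}}_1$ and $\gamma I-\widehat{\mathcal{L}}_2$ are invertible for $\eta,\gamma>0$. The operator $\mathcal{P}_{\gamma_*}$ is the Schur complement $\eta I-\widehat{\mathcal{L}}_2+\beta^2(\eta I-\widehat{\mathcal{L}}_1)^{-1}$ of the block matrix $\begin{bmatrix}\eta I-\widehat{\mathcal{L}}_1 & \phi I\\ -\frac{\beta^2}{\phi}I & \eta I-\widehat{\mathcal{L}}_2\end{bmatrix}$ ($\phi\neq0$), right-preconditioned by $(\gamma_* I-\widehat{\mathcal{L}}_2)^{-1}$. *)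

From HB Require Import structures.
From mathcomp Require Import all_boot all_order all_algebra.
From mathcomp Require Import classical_sets reals.
Set Implicit Arguments. Unset Strict Implicit. Unset Printing Implicit Defensive.
Import Order.TTheory GRing.Theory Num.Theory.
Local Open Scope ring_scope.
Local Open Scope classical_set_scope.

Definition dotv {R : realType} {N : nat} (x y : 'cV[R]_N) : R :=
  \sum_(i < N) x i 0 * y i 0.

Definition vnorm {R : realType} {N : nat} (x : 'cV[R]_N) : R :=
  Num.sqrt (dotv x x).

Definition opnorm {R : realType} {N : nat} (A : 'M[R]_N) : R :=
  sup [set vnorm (A *m x) | x in [set x : 'cV[R]_N | vnorm x <= 1]].

Definition Pgamma {R : realType} {N : nat} (eta beta gamma : R) (L1 L2 : 'M[R]_N)
  : 'M[R]_N :=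
  (eta%:M - L2 + beta ^+ 2 *: invmx (eta%:M - L1)) *m invmx (gamma%:M - L2).

(* Write c := beta^2/eta, so gamma_* = eta + c.  Every x is of the form
   x = (gamma_* I - L2)(eta I - L1) w, and for p := L1 w one computes
       P x = x + c p      and      <P x, p> <= -eta |p|^2,
   the inequality using the three sign hypotheses on L1, L2.  A purely
   Euclidean perturbation lemma then gives
       |P x| <= |x|      and      |x| <= (1 + beta^2/eta^2) |P x|,
   so P is injective (hence invertible), |P| <= 1 and |P^-1| <= 1 + beta^2/eta^2;
   the condition number is thus even bounded by 1 + beta^2/eta^2. *)
From mathcomp Require Import all_boot all_order all_algebra.
From mathcomp Require Import classical_sets reals.
From mathcomp Require Import ring lra.
Import Order.TTheory GRing.Theory Num.Theory.
Set Implicit Arguments. Unset Strict Implicit.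
Local Open Scope ring_scope.

Section DotProduct.
Variables (R : realType) (N : nat).
Implicit Types (x y z : 'cV[R]_N) (a : R).

Lemma dotvC x y : dotv x y = dotv y x.
Proof. by apply: eq_bigr => i _; rewrite mulrC. Qed.

Lemma dotvDl x y z : dotv (x + y) z = dotv x z + dotv y z.
Proof. by rewrite /dotv -big_split; apply: eq_bigr => i _; rewrite mxE mulrDl. Qed.

Lemma dotvZl a x z : dotv (a *: x) z = a * dotv x z.
Proof. by rewrite /dotv mulr_sumr; apply: eq_bigr => i _; rewrite mxE mulrA. Qed.

Lemma dotvNl x z : dotv (- x) z = - dotv x z.
Proof. by rewrite -scaleN1r dotvZl mulN1r. Qed.

Lemma dotvBl x y z : dotv (x - y) z = dotv x z - dotv y z.
Proof. by rewrite dotvDl dotvNl. Qed.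

Lemma dotvDr x y z : dotv z (x + y) = dotv z x + dotv z y.
Proof. by rewrite dotvC dotvDl !(dotvC z). Qed.

Lemma dotvZr a x z : dotv z (a *: x) = a * dotv z x.
Proof. by rewrite dotvC dotvZl dotvC. Qed.

Lemma dotv0l z : dotv 0 z = 0.
Proof. by rewrite -(scale0r 0) dotvZl mul0r. Qed.

Lemma dotv_ge0 x : 0 <= dotv x x.
Proof. by apply: sumr_ge0 => i _; rewrite -expr2 sqr_ge0. Qed.

Lemma dotv_eq0 x : dotv x x = 0 -> x = 0.
Proof.
move=> x0; apply/matrixP => i j; rewrite (ord1 j) mxE.
have /eqP : x i 0 * x i 0 = 0.
  by apply: (psumr_eq0P _ x0) => // k _; rewrite -expr2 sqr_ge0.
by rewrite mulf_eq0 orbb => /eqP.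
Qed.

Lemma vnorm0 : vnorm (0 : 'cV[R]_N) = 0.
Proof. by rewrite /vnorm dotv0l sqrtr0. Qed.

Lemma vnorm_le K x y :
  0 <= K -> dotv y y <= K ^+ 2 * dotv x x -> vnorm y <= K * vnorm x.
Proof.
move=> K0 yx; rewrite /vnorm -(ger0_norm K0) -sqrtr_sqr -sqrtrM ?sqr_ge0 //.
by rewrite ler_wsqrtr // real_normK ?num_real.
Qed.

Lemma vnorm_eq0 x : vnorm x <= 0 -> x = 0.
Proof.
move=> x0; apply: dotv_eq0; apply/eqP; rewrite eq_le dotv_ge0 andbT.
by rewrite -sqrtr_eq0 eq_le x0 sqrtr_ge0.
Qed.

End DotProduct.

Section OperatorNorm.
Local Open Scope classical_set_scope.
Variables (R : realType) (N : nat).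
Implicit Types (A : 'M[R]_N) (x : 'cV[R]_N).

Lemma opnorm_bound K A :
  0 <= K -> (forall x, vnorm (A *m x) <= K * vnorm x) ->
  0 <= opnorm A <= K.
Proof.
move=> K0 AK; have in0 : [set vnorm (A *m x) | x in [set x | vnorm x <= 1]] 0.
  by exists (0 : 'cV[R]_N); rewrite /= ?vnorm0 // mulmx0 vnorm0.
have ubK : forall x, vnorm x <= 1 -> vnorm (A *m x) <= K.
  by move=> x x1; apply: le_trans (AK x) _; rewrite -{2}(mulr1 K) ler_wpM2l.
apply/andP; split.
- by apply: ub_le_sup => //; exists K => _ [x /= x1 <-]; exact: ubK.
- by apply: ge_sup; [exists 0 | move=> _ [x /= x1 <-]; exact: ubK].
Qed.

Lemma unitmx_inj A : (forall x, A *m x = 0 -> x = 0) -> A \in unitmx.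
Proof.
move=> Ainj; rewrite -unitmx_tr unitmxE unitfE; apply/negP => /det0P [v v0 vA].
have /Ainj/(congr1 trmx) : A *m v^T = 0 by rewrite -[A]trmxK -trmx_mul vA trmx0.
by rewrite trmxK trmx0 => v0'; rewrite v0' eqxx in v0.
Qed.

Lemma condition_bound k A :
  0 <= k ->
  (forall x, vnorm (A *m x) <= vnorm x) ->
  (forall x, vnorm x <= k * vnorm (A *m x)) ->
  A \in unitmx /\ opnorm A * opnorm (invmx A) <= k.
Proof.
move=> k0 Ale1 Ainv.
have Aunit : A \in unitmx.
  apply: unitmx_inj => x Ax0; apply: vnorm_eq0.
  by have := Ainv x; rewrite Ax0 vnorm0 mulr0.
split=> //.
have /andP[nA0 nA1] : 0 <= opnorm A <= 1.
  by apply: opnorm_bound => // x; rewrite mul1r.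
have /andP[nI0 nIk] : 0 <= opnorm (invmx A) <= k.
  by apply: opnorm_bound => // y; have := Ainv (invmx A *m y); rewrite mulKVmx.
by rewrite -[k]mul1r ler_pM.
Qed.

End OperatorNorm.

Section Perturbation.
Variables (R : realType) (N : nat).
Implicit Types (x p : 'cV[R]_N).

Lemma dotv_add_scale x p c :
  dotv (x + c *: p) (x + c *: p) = dotv x x + 2 * c * dotv x p + c ^+ 2 * dotv p p.
Proof. by rewrite !(dotvDl, dotvDr, dotvZl, dotvZr) (dotvC p x); ring. Qed.

Lemma perturbation_bounds eta c x p :
  0 < eta -> 0 <= c ->
  let y := x + c *: p in
  dotv y p <= - (eta * dotv p p) ->
  dotv y y <= dotv x x /\ eta ^+ 2 * dotv x x <= (eta + c) ^+ 2 * dotv y y.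
Proof.
move=> eta_gt0 c_ge0 y yp_le.
have xE : x = y + (- c) *: p by rewrite scaleNr /y addrK.
clearbody y; rewrite {}xE dotv_add_scale.
have yp_eta := dotv_ge0 (y + eta *: p); rewrite dotv_add_scale in yp_eta.
have p_ge0 := dotv_ge0 p.
set Y := dotv y y in yp_eta *; set P := dotv p p in p_ge0 yp_le yp_eta *.
set a := dotv y p in yp_le yp_eta *.
have gap_ge0 : 0 <= - a - eta * P by lra.
have etaP_ge0 : 0 <= eta * P by rewrite mulr_ge0 // ltW.
have Y_ge : 0 <= Y - eta * (- a).
  have : eta * (eta * P) <= eta * (- a) by rewrite ler_pM2l //; lra.
  by rewrite expr2 in yp_eta; nra.
split.
- have : 0 <= c * (- a) by rewrite mulr_ge0 //; lra.
  by have := mulr_ge0 (sqr_ge0 c) p_ge0; rewrite sqrrN; nra.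
- have k1 : 0 <= (2 * eta * c + c ^+ 2) * (Y - eta * (- a)).
    by rewrite mulr_ge0 // addr_ge0 ?sqr_ge0 // !mulr_ge0 // ltW.
  have k2 : 0 <= c ^+ 2 * eta * (- a - eta * P).
    by rewrite !mulr_ge0 ?sqr_ge0 // ltW.
  by rewrite sqrrN; move: k1 k2; rewrite !expr2; nra.
Qed.
End Perturbation.

Definition dissipative (R : realType) (N : nat) (L : 'M[R]_N) : Prop :=
  forall x : 'cV[R]_N, dotv (L *m x) x <= 0.

Section ShiftedDissipative.
Variables (R : realType) (N : nat).

Lemma mul_shift (e : R) (L : 'M[R]_N) (v : 'cV[R]_N) :
  (e%:M - L) *m v = e *: v - L *m v.
Proof. by rewrite mulmxBl mul_scalar_mx. Qed.

(* Shifting a dissipative matrix by a positive multiple of the identity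
   gives an invertible matrix, since <(e I - L) x, x> >= e |x|^2. *)
Lemma shift_dissipative_unit (e : R) (L : 'M[R]_N) :
  0 < e -> dissipative L -> e%:M - L \in unitmx.
Proof.
move=> e_gt0 L_diss; apply: unitmx_inj => x x0.
have := congr1 (dotv^~ x) x0; rewrite /= mul_shift dotvBl dotvZl dotv0l => ex.
have Lx_le := L_diss x; have x_ge0 := dotv_ge0 x.
by apply: dotv_eq0; nra.
Qed.

End ShiftedDissipative.

Section SchurComplement.
Variables (R : realType) (N : nat) (eta beta : R) (L1 L2 : 'M[R]_N).
Hypotheses (eta_gt0 : 0 < eta) (L1_diss : dissipative L1)
  (L2_diss : dissipative L2)
  (L12_ge0 : forall w : 'cV[R]_N, 0 <= dotv (L1 *m w) (L2 *m w)).

Let c := beta ^+ 2 / eta.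
Let gamma := (eta ^+ 2 + beta ^+ 2) / eta.
Let P := Pgamma eta beta gamma L1 L2.
Let coord (w : 'cV[R]_N) := (gamma%:M - L2) *m ((eta%:M - L1) *m w).

Lemma c_ge0 : 0 <= c.
Proof. by rewrite divr_ge0 ?sqr_ge0 ?ltW. Qed.

Lemma gammaE : gamma = eta + c.
Proof. by rewrite /gamma /c mulrDl expr2 mulfK // gt_eqF. Qed.

Lemma shift1_unit : eta%:M - L1 \in unitmx.
Proof. exact: shift_dissipative_unit. Qed.

Lemma shift2_unit : gamma%:M - L2 \in unitmx.
Proof.
by apply: shift_dissipative_unit; rewrite // gammaE ltr_wpDr // c_ge0.
Qed.

Lemma Pgamma_perturbation (w : 'cV[R]_N) :
  P *m coord w = coord w + c *: (L1 *m w).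
Proof.
rewrite /coord /P /Pgamma -mulmxA mulKmx ?shift2_unit // [LHS]mulmxDl -scalemxAl.
rewrite mulKmx ?shift1_unit // !mul_shift gammaE.
have -> : beta ^+ 2 = c * eta by rewrite /c divfK // gt_eqF.
set p := L1 *m w; set q := L2 *m _; clearbody q p.
by apply/matrixP => i j; rewrite !mxE; ring.
Qed.

(* The perturbation direction p = L1 w points strongly backward:
   <P x, p> = gamma eta <p, w> - eta <p, L2 w> + <L2 p, p> - eta |p|^2, and the
   first three terms are <= 0 by the three sign hypotheses. *)
Lemma Pgamma_backward (w : 'cV[R]_N) :
  dotv (P *m coord w) (L1 *m w) <= - (eta * dotv (L1 *m w) (L1 *m w)).
Proof.
rewrite Pgamma_perturbation /coord !mul_shift mulmxBr -scalemxAr.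
have pw_le0 := L1_diss w; have pq_ge0 := L12_ge0 w.
have L2p_le0 := L2_diss (L1 *m w).
set p := L1 *m w in pw_le0 pq_ge0 L2p_le0 *.
rewrite !(dotvDl, dotvBl, dotvNl, dotvZl) (dotvC (L2 *m w)).
have gamma_ge0 : 0 <= gamma by rewrite gammaE addr_ge0 ?c_ge0 ?ltW.
have gpw_le0 : gamma * (eta * dotv p w) <= 0.
  by apply: mulr_ge0_le0 => //; apply: mulr_ge0_le0 => //; exact: ltW.
have epq_ge0 : 0 <= eta * dotv p (L2 *m w) by apply: mulr_ge0 => //; exact: ltW.
rewrite (dotvC w p) mulrBr {2}gammaE mulrDl; lra.
Qed.

Lemma Pgamma_norm_bounds (x : 'cV[R]_N) :
  vnorm (P *m x) <= vnorm x /\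
  vnorm x <= (1 + beta ^+ 2 / eta ^+ 2) * vnorm (P *m x).
Proof.
pose w := invmx (eta%:M - L1) *m (invmx (gamma%:M - L2) *m x).
have -> : x = coord w by rewrite /coord !mulKVmx ?shift1_unit ?shift2_unit.
have backward := Pgamma_backward w; rewrite Pgamma_perturbation in backward.
have [contract expand] := perturbation_bounds eta_gt0 c_ge0 backward.
rewrite -Pgamma_perturbation in contract expand.
have KE : 1 + beta ^+ 2 / eta ^+ 2 = (eta + c) / eta.
  by rewrite /c; field; rewrite gt_eqF.
split.
  by rewrite -[vnorm (coord w)]mul1r; apply: vnorm_le; rewrite ?expr1n ?mul1r.
apply: vnorm_le; first by rewrite KE divr_ge0 ?addr_ge0 ?c_ge0 ?ltW.
by rewrite KE expr_div_n mulrAC ler_pdivlMr ?exprn_gt0 // mulrC.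
Qed.

End SchurComplement.

Theorem theorem3 (R : realType) (N : nat) (eta beta : R) (L1 L2 : 'M[R]_N) :
  0 < eta ->
  (forall x : 'cV[R]_N, dotv (L1 *m x) x <= 0) ->
  (forall x : 'cV[R]_N, dotv (L2 *m x) x <= 0) ->
  (forall w : 'cV[R]_N, 0 <= dotv (L1 *m w) (L2 *m w)) ->
  let gamma := (eta ^+ 2 + beta ^+ 2) / eta in
  let P := Pgamma eta beta gamma L1 L2 in
  P \in unitmx /\
  opnorm P * opnorm (invmx P) <= 2 + beta ^+ 2 / eta ^+ 2.
Proof.
move=> eta_gt0 L1_diss L2_diss L12_ge0 gamma P.
have bounds := Pgamma_norm_bounds beta eta_gt0 L1_diss L2_diss L12_ge0.
have k_ge0 : 0 <= 1 + beta ^+ 2 / eta ^+ 2.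
  by rewrite addr_ge0 // divr_ge0 ?sqr_ge0.
have [P_unit P_cond] := condition_bound k_ge0 (fun x => (bounds x).1)
  (fun x => (bounds x).2).
split=> //; apply: le_trans P_cond _.
by rewrite lerD2r ler1n.
Qed.
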